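(* Let $\mathcal{C}$ be a symmetric monoidal category with discarding $\top$, completely mixed states $\mu$ and zero morphisms, satisfying normalisation, the sharpness axiom and the pure composition axiom, and suppose that for every object $A$, $\top_A$ is the unique effect $e$ on $A$ with $e\circ\psi=1_I$ for every causal pure state $\psi$ of $A$. Then the pre-duals axiom holds if and only if for every object $A$ the state $\mu_A$ has a purification $\omega$, a pure state of $A\otimes B$ for some object $B$, which also purifies $\mu_B$, i.e. $(1_A\otimes\top_B)\circ\omega=\mu_A$ and $(\top_A\otimes 1_B)\circ\omega=\mu_B$.
   Context: States: morphisms $I\to A$; effects: $A\to I$; scalars $I\to I$; unitors and associators suppressed. Discarding: effects $\top_A$ with $\top_{A\otimes B}=\top_A\otimes\top_B$, $\top_I=1_I$. Completely mixed states: states $\mu_A$ with $\mu_{A\otimes B}=\mu_A\otimes\mu_B$, $\mu_I=1_I$. Causal: $\top_B\circ f=\top_A$; co-causal: $f\circ\mu_A=\mu_B$. Zero morphisms: absorbing morphisms $0\colon A\to B$. Normalisation: every non-zero state $\rho$ is $\sigma\otimes r$ for a scalar $r$ and a unique causal state $\sigma$ (its normalisation). Pure: $f\colon A\to B$ is pure if $f=0$ or whenever $(1_B\otimes\top_C)\circ g=f$ for $g\colon A\to B\otimes C$, then $g=f\otimes\rho$ for some causal state $\rho$. A purification of a state $\rho$ of $A$ is a pure state $\psi$ of $A\otimes B$ with $(1_A\otimes\top_B)\circ\psi=\rho$. Sharpness axiom: for every causal pure state $\psi$ there is a unique pure co-causal effect $\overline{\psi}$ with $\overline{\psi}\circ\psi=1_I$,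 and $\psi$ is the unique causal pure state with this property. Extended to pure states by $\overline{0}=0$ and $\overline{\psi}:=\overline{\phi}\otimes r$ for non-zero pure $\psi$ with normalisation $\phi$ and $r=\top\circ\psi$. Pure composition axiom: for all causal pure states $\psi$ of $A\otimes B$ and $\phi$ of $A$, the state $(\overline{\phi}\otimes 1_B)\circ\psi$ and effect $\overline{\psi}\circ(\phi\otimes 1_B)$ are pure and $\overline{(\overline{\phi}\otimes 1_B)\circ\psi}=\overline{\psi}\circ(\phi\otimes 1_B)$. Pre-duals axiom: each $\mu_A$ has a purification $\omega$ (pure state of $A\otimes B$) with $(\top_A\otimes 1_B)\circ\omega=\mu_B$, $\overline{\omega}\circ(\mu_A\otimes 1_B)=\top_B$ and $\overline{\omega}\circ(1_A\otimes\mu_B)=\top_A$. *)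

Set Implicit Arguments.
Unset Strict Implicit.

Record SMC := {
  obj : Type;
  hom : obj -> obj -> Type;
  comp : forall A B C, hom B C -> hom A B -> hom A C;
  idm : forall A, hom A A;
  unit_obj : obj;
  tens : obj -> obj -> obj;
  tensm : forall A B C D, hom A B -> hom C D -> hom (tens A C) (tens B D);
  assoc : forall A B C, hom (tens A (tens B C)) (tens (tens A B) C);
  assoc_inv : forall A B C, hom (tens (tens A B) C) (tens A (tens B C));
  lunit : forall A, hom (tens unit_obj A) A;
  lunit_inv : forall A, hom A (tens unit_obj A);
  runit : forall A, hom (tens A unit_obj) A;
  runit_inv : forall A, hom A (tens A unit_obj);
  swap : forall A B, hom (tens A B) (tens B A);

  comp_assoc : forall A B C D (f : hom A B) (g : hom B C) (h : hom C D),
      comp h (comp g f) = comp (comp h g) f;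
  comp_id_l : forall A B (f : hom A B), comp (idm B) f = f;
  comp_id_r : forall A B (f : hom A B), comp f (idm A) = f;
  tens_id : forall A B, tensm (idm A) (idm B) = idm (tens A B);
  tens_comp : forall A1 A2 A3 B1 B2 B3
      (f : hom A1 A2) (f' : hom A2 A3) (g : hom B1 B2) (g' : hom B2 B3),
      tensm (comp f' f) (comp g' g) = comp (tensm f' g') (tensm f g);
  assoc_nat : forall A A' B B' C C' (f : hom A A') (g : hom B B') (h : hom C C'),
      comp (assoc A' B' C') (tensm f (tensm g h))
      = comp (tensm (tensm f g) h) (assoc A B C);
  assoc_iso1 : forall A B C, comp (assoc_inv A B C) (assoc A B C) = idm _;
  assoc_iso2 : forall A B C, comp (assoc A B C) (assoc_inv A B C) = idm _;
  lunit_nat : forall A B (f : hom A B),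
      comp (lunit B) (tensm (idm unit_obj) f) = comp f (lunit A);
  lunit_iso1 : forall A, comp (lunit_inv A) (lunit A) = idm _;
  lunit_iso2 : forall A, comp (lunit A) (lunit_inv A) = idm _;
  runit_nat : forall A B (f : hom A B),
      comp (runit B) (tensm f (idm unit_obj)) = comp f (runit A);
  runit_iso1 : forall A, comp (runit_inv A) (runit A) = idm _;
  runit_iso2 : forall A, comp (runit A) (runit_inv A) = idm _;
  swap_nat : forall A A' B B' (f : hom A A') (g : hom B B'),
      comp (swap A' B') (tensm f g) = comp (tensm g f) (swap A B);
  swap_inv : forall A B, comp (swap B A) (swap A B) = idm _;
  pentagon : forall A B C D,
      comp (assoc (tens A B) C D) (assoc A B (tens C D))
      = comp (tensm (assoc A B C) (idm D))
          (comp (assoc A (tens B C) D) (tensm (idm A) (assoc B C D)));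
  triangle : forall A B,
      comp (tensm (runit A) (idm B)) (assoc A unit_obj B)
      = tensm (idm A) (lunit B);
  hexagon : forall A B C,
      comp (assoc C A B) (comp (swap (tens A B) C) (assoc A B C))
      = comp (tensm (swap A C) (idm B))
          (comp (assoc A C B) (tensm (idm A) (swap B C)))
}.

Arguments obj s : clear implicits.
Arguments hom s _ _ : clear implicits.
Arguments comp {s A B C} _ _.
Arguments idm {s} A.
Arguments unit_obj {s}.
Arguments tens {s} _ _.
Arguments tensm {s A B C D} _ _.
Arguments assoc {s} A B C.
Arguments assoc_inv {s} A B C.
Arguments lunit {s} A.
Arguments lunit_inv {s} A.
Arguments runit {s} A.
Arguments runit_inv {s} A.
Arguments swap {s} A B.

Section Notions.
Variable C : SMC.
Notation I := (@unit_obj C).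

Definition discarding (top : forall A : obj C, hom C A I) : Prop :=
  (forall A B, top (tens A B) = comp (lunit I) (tensm (top A) (top B)))
  /\ top I = idm I.

Definition completely_mixed (mu : forall A : obj C, hom C I A) : Prop :=
  (forall A B, mu (tens A B) = comp (tensm (mu A) (mu B)) (lunit_inv I))
  /\ mu I = idm I.

Definition zero_morphisms (z : forall A B : obj C, hom C A B) : Prop :=
  (forall A B D (f : hom C B D), comp f (z A B) = z A D)
  /\ (forall A B D (f : hom C A B), comp (z B D) f = z A D)
  /\ (forall A B A' B' (f : hom C A B), tensm f (z A' B') = z (tens A A') (tens B B'))
  /\ (forall A B A' B' (f : hom C A B), tensm (z A' B') f = z (tens A' A) (tens B' B)).

Variable top : forall A : obj C, hom C A I.
Variable mu : forall A : obj C, hom C I A.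
Variable z : forall A B : obj C, hom C A B.

Definition causal A B (f : hom C A B) : Prop := comp (top B) f = top A.
Definition cocausal A B (f : hom C A B) : Prop := comp f (mu A) = mu B.

Definition state_scal A (s : hom C I A) (r : hom C I I) : hom C I A :=
  comp (runit A) (comp (tensm s r) (lunit_inv I)).
Definition effect_scal A (e : hom C A I) (r : hom C I I) : hom C A I :=
  comp (lunit I) (comp (tensm e r) (runit_inv A)).

Definition normalisation : Prop :=
  forall A (rho : hom C I A), rho <> z I A ->
    exists sigma r, causal sigma /\ rho = state_scal sigma r /\
      (forall sigma' r', causal sigma' -> rho = state_scal sigma' r' -> sigma' = sigma).

Definition marg_r A B D (g : hom C A (tens B D)) : hom C A B :=
  comp (runit B) (comp (tensm (idm B) (top D)) g).
Definition marg_l X A B (g : hom C X (tens A B)) : hom C X B :=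
  comp (lunit B) (comp (tensm (top A) (idm B)) g).

Definition pure A B (f : hom C A B) : Prop :=
  f = z A B \/
  (forall D (g : hom C A (tens B D)), marg_r g = f ->
     exists rho : hom C I D, causal rho /\ g = comp (tensm f rho) (runit_inv A)).

Definition purification A B (rho : hom C I A) (psi : hom C I (tens A B)) : Prop :=
  pure psi /\ marg_r psi = rho.

Definition is_dual A (psi : hom C I A) (e : hom C A I) : Prop :=
  pure e /\ cocausal e /\ comp e psi = idm I.

Definition sharpness : Prop :=
  forall A (psi : hom C I A), causal psi -> pure psi ->
    (exists e, is_dual psi e /\ (forall e', is_dual psi e' -> e' = e))
    /\ (forall e psi', is_dual psi e -> causal psi' -> pure psi' ->
          comp e psi' = idm I -> psi' = psi).

(* Extended overline on pure states, as a relation: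
   is_bar psi e  means  e = overline(psi). *)
Definition is_bar A (psi : hom C I A) (e : hom C A I) : Prop :=
  (psi = z I A /\ e = z A I) \/
  (psi <> z I A /\ exists phi e0,
      causal phi /\ psi = state_scal phi (comp (top A) psi)
      /\ is_dual phi e0 /\ e = effect_scal e0 (comp (top A) psi)).

Definition pure_composition : Prop :=
  forall A B (psi : hom C I (tens A B)) (phi : hom C I A) ephi epsi,
    causal psi -> pure psi -> causal phi -> pure phi ->
    is_dual phi ephi -> is_dual psi epsi ->
    let s := comp (lunit B) (comp (tensm ephi (idm B)) psi) in
    let t := comp epsi (comp (tensm phi (idm B)) (lunit_inv B)) in
    pure s /\ pure t /\ is_bar s t.

Definition pre_duals : Prop :=
  forall A, exists B (omega : hom C I (tens A B)),
    purification (mu A) omega /\ marg_l omega = mu B /\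
    exists eo, is_bar omega eo /\
      comp eo (comp (tensm (mu A) (idm B)) (lunit_inv B)) = top B /\
      comp eo (comp (tensm (idm A) (mu B)) (runit_inv A)) = top A.

Definition top_unique_on_pure : Prop :=
  forall A (e : hom C A I),
    (forall psi : hom C I A, causal psi -> pure psi -> comp e psi = idm I) ->
    e = top A.

End Notions.

(* The effect demanded by the pre-duals axiom is the overline of [omega] itself.  The
   effect [top A] is determined by its values on causal pure states, so to check
   [overline omega ∘ (1 ⊗ mu B) = top A] we test on such a [psi].  Writing [omega = phi r]
   with [phi] its normalisation, pure composition identifies [overline phi ∘ (psi ⊗ 1)] with
   the overline of the pure state [(overline psi ⊗ 1) ∘ phi]; an overline acts on [mu] as
   discarding does, so the value is [r · overline psi ∘ marg omega = overline psi ∘ mu A = 1].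
   The equation on the other side follows through the symmetry, which is a causal and
   co-causal isomorphism.  If [omega = 0] then [mu A = 0], and this forces [top A = 0]. *)

From Stdlib Require Import Classical.
Set Implicit Arguments.
Unset Strict Implicit.

Local Notation "g ∘ f" := (comp g f) (at level 40, left associativity).
Local Notation "f ⊗ g" := (tensm f g) (at level 35).

Ltac assoc_r := repeat rewrite <- comp_assoc.

Section Coherence.
Variable C : SMC.
Notation I := (@unit_obj C).

Lemma split_mono_cancel {A B D} {i : hom C B D} {j : hom C D B} {f g : hom C A B} :
  j ∘ i = idm B -> i ∘ f = i ∘ g -> f = g.
Proof.
  intros H E. rewrite <- (comp_id_l f), <- (comp_id_l g), <- H.
  rewrite <- !comp_assoc, E. reflexivity.
Qed.

Lemma split_epi_cancel {A B D} {i : hom C A B} {j : hom C B A} {f g : hom C B D} :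
  i ∘ j = idm B -> f ∘ i = g ∘ i -> f = g.
Proof.
  intros H E. rewrite <- (comp_id_r f), <- (comp_id_r g), <- H.
  rewrite !comp_assoc, E. reflexivity.
Qed.

Lemma lunit_inv_nat A B (f : hom C A B) :
  lunit_inv B ∘ f = (idm I ⊗ f) ∘ lunit_inv A.
Proof.
  apply (split_mono_cancel (lunit_iso1 B)).
  assoc_r. rewrite comp_assoc, lunit_iso2, comp_id_l.
  rewrite comp_assoc, lunit_nat. assoc_r. rewrite lunit_iso2, comp_id_r. reflexivity.
Qed.

Lemma runit_inv_nat A B (f : hom C A B) :
  runit_inv B ∘ f = (f ⊗ idm I) ∘ runit_inv A.
Proof.
  apply (split_mono_cancel (runit_iso1 B)).
  assoc_r. rewrite comp_assoc, runit_iso2, comp_id_l.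
  rewrite comp_assoc, runit_nat. assoc_r. rewrite runit_iso2, comp_id_r. reflexivity.
Qed.

Lemma tensm_idl_inj A B (f g : hom C A B) : idm I ⊗ f = idm I ⊗ g -> f = g.
Proof.
  intro E. apply (split_epi_cancel (lunit_iso2 A)).
  rewrite <- !lunit_nat, E. reflexivity.
Qed.

Lemma tensm_idr_inj A B (f g : hom C A B) : f ⊗ idm I = g ⊗ idm I -> f = g.
Proof.
  intro E. apply (split_epi_cancel (runit_iso2 A)).
  rewrite <- !runit_nat, E. reflexivity.
Qed.

Lemma tensm_id_lunit A : idm I ⊗ lunit A = lunit (tens I A).
Proof. apply (split_mono_cancel (lunit_iso1 A)). apply lunit_nat. Qed.

Lemma lunit_tens A B : (lunit A ⊗ idm B) ∘ assoc I A B = lunit (tens A B).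
Proof.
  apply tensm_idl_inj. apply (split_mono_cancel (assoc_iso1 I A B)).
  rewrite <- triangle, <- (tens_id A B).
  rewrite comp_assoc, assoc_nat. assoc_r.
  rewrite pentagon, comp_assoc, <- tens_comp, triangle, comp_id_l.
  rewrite comp_assoc, <- assoc_nat. assoc_r. rewrite <- tens_comp, comp_id_l. reflexivity.
Qed.

Lemma lunit_unit : lunit I = runit I.
Proof.
  assert (H : lunit I ⊗ idm I = runit I ⊗ idm I).
  { apply (split_epi_cancel (assoc_iso2 I I I)).
    rewrite lunit_tens, triangle. symmetry. apply tensm_id_lunit. }
  apply (split_epi_cancel (runit_iso2 (tens I I))).
  rewrite <- runit_nat, H, runit_nat. reflexivity.
Qed.

Lemma lunit_inv_unit : lunit_inv I = runit_inv I.
Proof.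
  apply (split_mono_cancel (lunit_iso1 I)).
  rewrite lunit_iso2, lunit_unit, runit_iso2. reflexivity.
Qed.

(* The hexagon at (I, I, A), with the triangle and [lunit_tens] collapsing both sides. *)
Lemma runit_swap A : runit A ∘ swap I A = lunit A.
Proof.
  apply tensm_idr_inj.
  assert (E : (runit A ⊗ idm I) ∘ (assoc A I I ∘ (swap (tens I I) A ∘ assoc I I A))
              = (lunit A ⊗ idm I) ∘ (assoc I A I ∘ (idm I ⊗ swap I A))).
  { rewrite comp_assoc, triangle, comp_assoc, <- swap_nat. assoc_r.
    rewrite lunit_tens, comp_assoc, lunit_tens. symmetry. apply lunit_nat. }
  rewrite hexagon, comp_assoc, <- tens_comp, comp_id_l, !comp_assoc in E.
  apply (split_epi_cancel (i := idm I ⊗ swap I A) (j := idm I ⊗ swap A I)) in E.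
  - apply (split_epi_cancel (assoc_iso2 I A I)) in E. exact E.
  - rewrite <- tens_comp, swap_inv, comp_id_l. apply tens_id.
Qed.

Lemma lunit_swap A : lunit A ∘ swap A I = runit A.
Proof. rewrite <- runit_swap, <- comp_assoc, swap_inv. apply comp_id_r. Qed.

Lemma swap_runit_inv A : swap A I ∘ runit_inv A = lunit_inv A.
Proof.
  apply (split_mono_cancel (lunit_iso1 A)).
  rewrite comp_assoc, lunit_swap, runit_iso2, lunit_iso2. reflexivity.
Qed.

Lemma lunit_swap_unit : lunit I ∘ swap I I = lunit I.
Proof. rewrite lunit_unit at 2. apply lunit_swap. Qed.

Lemma swap_lunit_inv_unit : swap I I ∘ lunit_inv I = lunit_inv I.
Proof.
  apply (split_mono_cancel (lunit_iso1 I)).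
  rewrite comp_assoc, lunit_swap_unit, lunit_iso2. reflexivity.
Qed.

Lemma states_tens_comm X Y (a : hom C I X) (b : hom C I Y) :
  (idm X ⊗ b) ∘ (runit_inv X ∘ a) = (a ⊗ idm Y) ∘ (lunit_inv Y ∘ b).
Proof.
  rewrite lunit_inv_nat, runit_inv_nat, !comp_assoc, <- !tens_comp,
    !comp_id_l, !comp_id_r, lunit_inv_unit.
  reflexivity.
Qed.

Lemma state_scalE A (s : hom C I A) r : state_scal s r = s ∘ r.
Proof.
  unfold state_scal.
  rewrite <- (comp_id_r s) at 1. rewrite <- (comp_id_l r) at 1.
  rewrite tens_comp. assoc_r. rewrite (comp_assoc _ _ (runit A)), runit_nat.
  assoc_r. rewrite <- lunit_unit, (comp_assoc _ _ (lunit I)), lunit_nat.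
  assoc_r. rewrite lunit_iso2, comp_id_r. reflexivity.
Qed.

Lemma effect_scalE A (e : hom C A I) r : effect_scal e r = r ∘ e.
Proof.
  unfold effect_scal.
  rewrite <- (comp_id_l e) at 1. rewrite <- (comp_id_r r) at 1.
  rewrite tens_comp. assoc_r. rewrite (comp_assoc _ _ (lunit I)), lunit_nat.
  assoc_r. rewrite lunit_unit, (comp_assoc _ _ (runit I)), runit_nat.
  assoc_r. rewrite runit_iso2, comp_id_r. reflexivity.
Qed.

(* Both composites are the tensor product [r ⊗ s] read through the two unitors of [I]. *)
Lemma scalar_comm (r s : hom C I I) : r ∘ s = s ∘ r.
Proof.
  rewrite <- state_scalE, <- effect_scalE. unfold state_scal, effect_scal.
  rewrite lunit_unit, lunit_inv_unit. reflexivity.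
Qed.

End Coherence.

Section Theory.
Variable C : SMC.
Notation I := (@unit_obj C).
Variable top : forall A : obj C, hom C A I.
Variable mu : forall A : obj C, hom C I A.
Variable z : forall A B : obj C, hom C A B.
Hypothesis Htop : discarding top.
Hypothesis Hmu : completely_mixed mu.
Hypothesis Hz : zero_morphisms z.
Hypothesis Hnorm : normalisation top z.
Hypothesis Hsharp : sharpness top mu z.
Hypothesis Hpc : pure_composition top mu z.
Hypothesis Huniq : top_unique_on_pure top z.

Lemma comp_zero_r A B D (f : hom C B D) : f ∘ z A B = z A D.
Proof. apply Hz. Qed.

Lemma comp_zero_l A B D (f : hom C A B) : z B D ∘ f = z A D.
Proof. apply Hz. Qed.

Lemma tensm_zero_r A B A' B' (f : hom C A B) : f ⊗ z A' B' = z (tens A A') (tens B B').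
Proof. apply Hz. Qed.

Lemma unit_zero_collapse : idm I = z I I -> forall A B (f : hom C A B), f = z A B.
Proof.
  intros H A B f.
  rewrite <- (comp_id_r f), <- (runit_iso2 A), comp_assoc, <- runit_nat, H,
    tensm_zero_r, comp_zero_r, comp_zero_l.
  reflexivity.
Qed.

Lemma top_unit : top I = idm I.
Proof. apply Htop. Qed.

Lemma top_tens A B : top (tens A B) = lunit I ∘ (top A ⊗ top B).
Proof. apply Htop. Qed.

Lemma mu_unit : mu I = idm I.
Proof. apply Hmu. Qed.

Lemma mu_tens A B : mu (tens A B) = (mu A ⊗ mu B) ∘ lunit_inv I.
Proof. apply Hmu. Qed.

Lemma marg_r_zero X D : marg_r top (z I (tens X D)) = z I X.
Proof. unfold marg_r. rewrite !comp_zero_r. reflexivity. Qed.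

Lemma marg_r_comp A A' X D (g : hom C A (tens X D)) (h : hom C A' A) :
  marg_r top g ∘ h = marg_r top (g ∘ h).
Proof. unfold marg_r. assoc_r. reflexivity. Qed.

Lemma marg_r_tensm_idr A X Y D (g : hom C A (tens X D)) (f : hom C X Y) :
  marg_r top ((f ⊗ idm D) ∘ g) = f ∘ marg_r top g.
Proof.
  unfold marg_r.
  rewrite (comp_assoc _ _ (idm Y ⊗ top D)), <- tens_comp, comp_id_l, comp_id_r.
  rewrite <- (comp_id_r f) at 1. rewrite <- (comp_id_l (top D)) at 1.
  rewrite tens_comp. assoc_r. rewrite (comp_assoc _ _ (runit Y)), runit_nat.
  assoc_r. reflexivity.
Qed.

Lemma top_marg_r A X D (g : hom C A (tens X D)) : top (tens X D) ∘ g = top X ∘ marg_r top g.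
Proof.
  unfold marg_r. rewrite top_tens, comp_assoc, <- runit_nat. assoc_r.
  rewrite (comp_assoc _ _ (top X ⊗ idm I)), <- tens_comp, comp_id_l, comp_id_r, lunit_unit.
  reflexivity.
Qed.

Lemma top_marg_r_effect X Y (phi : hom C I (tens X Y)) (e : hom C X I) :
  top Y ∘ (lunit Y ∘ ((e ⊗ idm Y) ∘ phi)) = e ∘ marg_r top phi.
Proof.
  unfold marg_r. rewrite comp_assoc, <- lunit_nat. assoc_r.
  rewrite (comp_assoc _ _ (idm I ⊗ top Y)), <- tens_comp, comp_id_l, comp_id_r.
  rewrite <- (comp_id_r e) at 1. rewrite <- (comp_id_l (top Y)) at 1.
  rewrite tens_comp. assoc_r.
  rewrite lunit_unit, (comp_assoc _ _ (runit I)), runit_nat. assoc_r. reflexivity.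
Qed.

Lemma marg_r_swap A B (omega : hom C I (tens A B)) :
  marg_r top (swap A B ∘ omega) = marg_l top omega.
Proof.
  unfold marg_r, marg_l.
  rewrite (comp_assoc _ _ (idm B ⊗ top A)), <- swap_nat. assoc_r.
  rewrite (comp_assoc _ _ (runit B)), runit_swap. reflexivity.
Qed.

Lemma causal_tens_states X D (phi : hom C I X) (rho : hom C I D) :
  causal top phi -> causal top rho -> causal top ((phi ⊗ rho) ∘ runit_inv I).
Proof.
  unfold causal. intros Hphi Hrho. rewrite top_tens. assoc_r.
  rewrite (comp_assoc _ _ (top X ⊗ top D)), <- tens_comp, Hphi, Hrho, top_unit, tens_id,
    comp_id_l, lunit_unit, runit_iso2.
  reflexivity.
Qed.

Lemma swap_causal A B : causal top (swap A B).
Proof.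
  unfold causal. rewrite !top_tens. assoc_r.
  rewrite <- swap_nat, comp_assoc, lunit_swap_unit. reflexivity.
Qed.

Lemma swap_cocausal A B : cocausal mu (swap A B).
Proof.
  unfold cocausal. rewrite !mu_tens, comp_assoc, swap_nat. assoc_r.
  rewrite swap_lunit_inv_unit. reflexivity.
Qed.

(* The normalisation of a non-zero pure state is pure: a dilation of the normalisation,
   scaled by [r], is a dilation of the state, and normalisations are unique. *)
Lemma pure_normalised X (omega phi : hom C I X) r :
  pure top z omega -> omega <> z I X -> causal top phi -> omega = phi ∘ r ->
  pure top z phi.
Proof.
  intros [Hz0 | Hp] Hnz Hc Ho; [contradiction |].
  right. intros D g Hg.
  destruct (Hp D (g ∘ r)) as [rho [Hrho Hgr]].
  { rewrite <- marg_r_comp, Hg. symmetry; exact Ho. }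
  exists rho. split; [exact Hrho |].
  assert (Hnz' : g ∘ r <> z I (tens X D)).
  { intro E. apply Hnz. rewrite Ho, <- Hg, marg_r_comp, E. apply marg_r_zero. }
  destruct (Hnorm Hnz') as [sigma [r0 [_ [_ Huq]]]].
  transitivity sigma.
  - apply (Huq g r).
    + unfold causal. rewrite top_marg_r, Hg. exact Hc.
    + symmetry; apply state_scalE.
  - symmetry. apply (Huq _ r).
    + apply causal_tens_states; assumption.
    + rewrite state_scalE, Hgr, Ho, <- (comp_id_r rho) at 1.
      rewrite tens_comp. assoc_r. rewrite <- runit_inv_nat. reflexivity.
Qed.

Lemma pure_iso_comp A X Y (x : hom C A X) (f : hom C X Y) (f' : hom C Y X) :
  f' ∘ f = idm X -> f ∘ f' = idm Y -> pure top z x -> pure top z (f ∘ x).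
Proof.
  intros H1 H2 [Hx | Hx].
  - left. rewrite Hx. apply comp_zero_r.
  - right. intros D g Hg.
    destruct (Hx D ((f' ⊗ idm D) ∘ g)) as [rho [Hr Hgr]].
    { rewrite marg_r_tensm_idr, Hg, comp_assoc, H1. apply comp_id_l. }
    exists rho. split; [exact Hr |].
    assert (E : g = (f ⊗ idm D) ∘ ((f' ⊗ idm D) ∘ g)).
    { rewrite comp_assoc, <- tens_comp, H2, comp_id_l, tens_id, comp_id_l. reflexivity. }
    rewrite E, Hgr, comp_assoc, <- tens_comp, comp_id_l. reflexivity.
Qed.

Lemma pure_comp_iso A A' B (e : hom C A B) (h : hom C A' A) (h' : hom C A A') :
  h' ∘ h = idm A' -> h ∘ h' = idm A -> pure top z e -> pure top z (e ∘ h).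
Proof.
  intros H1 H2 [He | He].
  - left. rewrite He. apply comp_zero_l.
  - right. intros D g Hg.
    destruct (He D (g ∘ h')) as [rho [Hr Hgr]].
    { rewrite <- marg_r_comp, Hg, <- comp_assoc, H2. apply comp_id_r. }
    exists rho. split; [exact Hr |].
    assert (E : g = (g ∘ h') ∘ h).
    { rewrite <- comp_assoc, H1. symmetry; apply comp_id_r. }
    rewrite E, Hgr. assoc_r.
    rewrite runit_inv_nat, comp_assoc, <- tens_comp, comp_id_r. reflexivity.
Qed.

Lemma is_dual_iso A A' (phi : hom C I A) e (f : hom C A A') (f' : hom C A' A) :
  f' ∘ f = idm A -> f ∘ f' = idm A' -> cocausal mu f' ->
  is_dual top mu z phi e -> is_dual top mu z (f ∘ phi) (e ∘ f').
Proof.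
  unfold is_dual, cocausal. intros H1 H2 Hf' [Hpe [Hce He]]. split; [| split].
  - exact (pure_comp_iso H2 H1 Hpe).
  - rewrite <- comp_assoc, Hf'. exact Hce.
  - rewrite <- comp_assoc, (comp_assoc _ _ f'), H1, comp_id_l. exact He.
Qed.

Lemma is_bar_iso A A' (psi : hom C I A) e (f : hom C A A') (f' : hom C A' A) :
  f' ∘ f = idm A -> f ∘ f' = idm A' -> causal top f -> cocausal mu f' ->
  is_bar top mu z psi e -> is_bar top mu z (f ∘ psi) (e ∘ f').
Proof.
  intros H1 H2 Hf Hf' [[Hpsi He] | [Hnz [phi [e0 [Hc [Hpsi [Hd He]]]]]]].
  - left. rewrite Hpsi, He, comp_zero_r, comp_zero_l. split; reflexivity.
  - right. split.
    + intro E. apply Hnz.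
      rewrite <- (comp_id_l psi), <- H1, <- comp_assoc, E. apply comp_zero_r.
    + exists (f ∘ phi), (e0 ∘ f').
      assert (Hr : top A' ∘ (f ∘ psi) = top A ∘ psi).
      { unfold causal in Hf. rewrite comp_assoc, Hf. reflexivity. }
      rewrite Hr, state_scalE, effect_scalE. rewrite state_scalE in Hpsi.
      rewrite effect_scalE in He. split; [| split; [| split]].
      * unfold causal in *. rewrite comp_assoc, Hf. exact Hc.
      * rewrite <- comp_assoc, <- Hpsi. reflexivity.
      * exact (is_dual_iso H1 H2 Hf' Hd).
      * rewrite He. assoc_r. reflexivity.
Qed.

Lemma bar_comp_mu Y (s : hom C I Y) t : is_bar top mu z s t -> t ∘ mu Y = top Y ∘ s.
Proof.
  intros [[Hs Ht] | [_ [phi [e0 [_ [_ [[_ [Hcc _]] He]]]]]]].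
  - rewrite Hs, Ht, comp_zero_r, comp_zero_l. reflexivity.
  - unfold cocausal in Hcc. rewrite He, effect_scalE. assoc_r.
    rewrite Hcc, mu_unit, comp_id_r. reflexivity.
Qed.

(* A causal pure state of [A] would have a co-causal dual [e], giving [1 = e ∘ mu A = 0];
   without one, [Huniq] holds vacuously and [z A I] is [top A]. *)
Lemma top_zero_of_mu_zero A : mu A = z I A -> top A = z A I.
Proof.
  intro Hm.
  destruct (classic (exists psi : hom C I A, causal top psi /\ pure top z psi))
    as [[psi [Hc Hp]] | Hn].
  - destruct (Hsharp Hc Hp) as [[e [[_ [Hcc _]] _]] _].
    unfold cocausal in Hcc. rewrite Hm, comp_zero_r, mu_unit in Hcc.
    apply unit_zero_collapse. symmetry; exact Hcc.
  - symmetry. apply Huniq. intros psi Hc Hp. exfalso. apply Hn. exists psi. auto.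
Qed.

Lemma is_bar_exists A (psi : hom C I A) : pure top z psi -> exists e, is_bar top mu z psi e.
Proof.
  intro Hp.
  destruct (classic (psi = z I A)) as [H0 | Hnz].
  - exists (z A I). left. split; [exact H0 | reflexivity].
  - destruct (Hnorm Hnz) as [phi [r [Hc [Hpsi _]]]]. rewrite state_scalE in Hpsi.
    assert (Hr : top A ∘ psi = r).
    { unfold causal in Hc. rewrite Hpsi, comp_assoc, Hc, top_unit. apply comp_id_l. }
    destruct (Hsharp Hc (pure_normalised Hp Hnz Hc Hpsi)) as [[e0 [Hd0 _]] _].
    exists (effect_scal e0 r). right. split; [exact Hnz |].
    exists phi, e0. rewrite Hr, state_scalE. auto.
Qed.

Lemma dual_comp_mu X Y (phi : hom C I (tens X Y)) (psi : hom C I X) ephi epsi :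
  causal top phi -> pure top z phi -> causal top psi -> pure top z psi ->
  is_dual top mu z psi epsi -> is_dual top mu z phi ephi ->
  ephi ∘ ((psi ⊗ idm Y) ∘ (lunit_inv Y ∘ mu Y)) = epsi ∘ marg_r top phi.
Proof.
  intros Hcphi Hpphi Hcpsi Hppsi Hdpsi Hdphi.
  destruct (Hpc Hcphi Hpphi Hcpsi Hppsi Hdpsi Hdphi) as [_ [_ Hb]].
  apply bar_comp_mu in Hb. rewrite top_marg_r_effect in Hb.
  rewrite <- Hb. assoc_r. reflexivity.
Qed.

Lemma bar_tens_mu_r X Y (omega : hom C I (tens X Y)) e :
  pure top z omega -> marg_r top omega = mu X -> is_bar top mu z omega e ->
  e ∘ ((idm X ⊗ mu Y) ∘ runit_inv X) = top X.
Proof.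
  intros Hp Hmr [[Ho He] | [Hnz [phi [e0 [Hc [Ho [Hd He]]]]]]].
  - rewrite He, comp_zero_l. symmetry. apply top_zero_of_mu_zero.
    rewrite <- Hmr, Ho. apply marg_r_zero.
  - set (r := top (tens X Y) ∘ omega) in *.
    rewrite state_scalE in Ho. rewrite effect_scalE in He.
    apply Huniq. intros psi Hcpsi Hppsi.
    destruct (Hsharp Hcpsi Hppsi) as [[epsi [Hdpsi _]] _].
    rewrite He. assoc_r. rewrite states_tens_comm.
    rewrite (dual_comp_mu Hc (pure_normalised Hp Hnz Hc Ho) Hcpsi Hppsi Hdpsi Hd).
    destruct Hdpsi as [_ [Hcc _]]. unfold cocausal in Hcc.
    rewrite (scalar_comm r). assoc_r. rewrite marg_r_comp, <- Ho, Hmr, Hcc.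
    apply mu_unit.
Qed.

Lemma bar_tens_mu_l X Y (omega : hom C I (tens X Y)) e :
  pure top z omega -> marg_l top omega = mu Y -> is_bar top mu z omega e ->
  e ∘ ((mu X ⊗ idm Y) ∘ lunit_inv Y) = top Y.
Proof.
  intros Hp Hml Hb.
  assert (H := bar_tens_mu_r
    (pure_iso_comp (swap_inv X Y) (swap_inv Y X) Hp)
    (eq_trans (marg_r_swap omega) Hml)
    (is_bar_iso (swap_inv X Y) (swap_inv Y X) (swap_causal X Y) (swap_cocausal Y X) Hb)).
  rewrite <- H. assoc_r.
  rewrite (comp_assoc _ _ (swap Y X)), swap_nat. assoc_r.
  rewrite swap_runit_inv. reflexivity.
Qed.

End Theory.

Theorem mainTheorem7 (C : SMC)
  (top : forall A : obj C, hom C A unit_obj)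
  (mu : forall A : obj C, hom C unit_obj A)
  (z : forall A B : obj C, hom C A B)
  (Htop : discarding top) (Hmu : completely_mixed mu) (Hz : zero_morphisms z)
  (Hnorm : normalisation top z)
  (Hsharp : sharpness top mu z)
  (Hpc : pure_composition top mu z)
  (Huniq : top_unique_on_pure top z) :
  pre_duals top mu z <->
  (forall A : obj C, exists (B : obj C) (omega : hom C unit_obj (tens A B)),
     purification top z (mu A) omega /\ marg_l top omega = mu B).
Proof.
  split.
  - intros H A. destruct (H A) as [B [omega [Hp [Hml _]]]]. exists B, omega. auto.
  - intros H A. destruct (H A) as [B [omega [[Hp Hmr] Hml]]].
    destruct (is_bar_exists Htop Hz Hnorm Hsharp Hp) as [e He].
    exists B, omega. split; [split; assumption |]. split; [exact Hml |].
    exists e. split; [exact He | split].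
    + exact (bar_tens_mu_l Htop Hmu Hz Hnorm Hsharp Hpc Huniq Hp Hml He).
    + exact (bar_tens_mu_r Htop Hmu Hz Hnorm Hsharp Hpc Huniq Hp Hmr He).
Qed.
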